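(* In $E^{\infty}_8$ let $b_k$ be the number of elements of length $k$ and, for $k\ge1$ and $1\le i\le8$, let $b_{k;i}$ be the number of elements of length $k$ whose smallest representative word in length-lexicographic order (with $x_1<\cdots<x_8$) begins with $x_i$. Then $b_0=1$, $b_{1;i}=1$, $b_k=\sum_{i=1}^8b_{k;i}$ for $k\ge1$, and for $k\ge2$: $$b_{k;j}=\sum_{i=\max(1,j-1)}^{8}b_{k-1;i}\quad(j\ne5),\qquad b_{k;5}=b_{k-1;3}+\sum_{i=5}^8b_{k-1;i}.$$
   Context: $E^{\infty}_8=\langle x_1,\dots,x_8\mid x_ix_j=x_jx_i \text{ whenever } \{x_i,x_j\}\text{ is not an edge}\rangle$, where the edges are $x_1x_2$, $x_2x_3$, $x_3x_4$, $x_3x_5$, $x_5x_6$, $x_6x_7$, $x_7x_8$. *)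

From mathcomp Require Import all_boot.
Set Implicit Arguments. Unset Strict Implicit. Unset Printing Implicit Defensive.

(* Letters: x : 'I_8 stands for the generator x_{x+1}. *)
Definition letter := 'I_8.

(* Edges of the defining graph, on 1-based indices. *)
Definition edge (a b : nat) : bool :=
  [|| [&& a == 1 & b == 2], [&& a == 2 & b == 3], [&& a == 3 & b == 4],
      [&& a == 3 & b == 5], [&& a == 5 & b == 6], [&& a == 6 & b == 7]
    | [&& a == 7 & b == 8]].

Definition adj (a b : nat) : bool := edge a b || edge b a.

Definition commuting (x y : letter) : bool := ~~ adj (val x).+1 (val y).+1.

Definition swap_at (i : nat) (s : seq letter) : seq letter :=
  take i s ++ [:: nth ord0 s i.+1; nth ord0 s i] ++ drop i.+2 s.

Definition stepb (s t : seq letter) : bool :=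
  has (fun i => [&& i.+1 < size s, commuting (nth ord0 s i) (nth ord0 s i.+1)
                 & t == swap_at i s]) (iota 0 (size s)).

(* Words of length k; two words represent the same element of E^oo_8 iff
   they are connected by elementary commutation steps. *)
Definition stepR (k : nat) : rel (k.-tuple letter) := fun u v => stepb u v.

Definition cls (k : nat) (w : k.-tuple letter) : {set k.-tuple letter} :=
  [set v | connect (@stepR k) w v].

Definition elements (k : nat) : {set {set k.-tuple letter}} :=
  [set cls w | w in [set: k.-tuple letter]].

Definition b (k : nat) : nat := #|elements k|.

Fixpoint lexle (s t : seq nat) : bool :=
  match s, t with
  | a :: s', c :: t' => (a < c) || ((a == c) && lexle s' t')
  | _, _ => true
  end.

Definition is_min (k : nat) (C : {set k.-tuple letter}) (w : k.-tuple letter) : bool :=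
  (w \in C) && [forall v in C, lexle (map val w) (map val v)].

(* b_{k;j} (j is 1-based): number of elements of length k whose smallest
   representative word begins with x_j. *)
Definition bf (k j : nat) : nat :=
  #|[set C in elements k |
      [exists w, is_min C w && (ohead (map (fun x : letter => (val x).+1) w) == Some j)]]|.

From mathcomp Require Import all_boot zify.
Set Implicit Arguments. Unset Strict Implicit. Unset Printing Implicit Defensive.

(* Every element has a unique length-lexicographically least word, its
   normal form.  Call a pair a i allowed when a <= i or {x_a, x_i} is an
   edge.  Adjacent letters of a normal form are allowed (else swap them).
   Conversely, if i m is a normal form and a i is allowed, so is a i m: a
   smaller equivalent word starts with some c < a, and c must be commuted to
   the front past a and then past i, so i < c < a with x_c commuting with
   x_a and x_i.  The numbering of E^oo_8 admits no such triple with x_a and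
   x_i adjacent, so x_a and x_i commute, and a i is not allowed.  Hence the
   normal forms of length k+1 starting with x_j are x_j followed by the
   normal forms of length k whose first letter x_i makes j i allowed, i.e.
   i >= max(1, j-1) for j <> 5, and i = 3 or i >= 5 for j = 5. *)

Section TraceEquivalence.

Variables (n : nat) (co : rel 'I_n).
Hypothesis coC : symmetric co.

Definition trace_step (s t : seq 'I_n) : Prop :=
  exists u x y v, [/\ co x y, s = u ++ x :: y :: v & t = u ++ y :: x :: v].

Inductive trace_eq : seq 'I_n -> seq 'I_n -> Prop :=
| trace_eq_refl s : trace_eq s s
| trace_eq_step s t u : trace_step s t -> trace_eq t u -> trace_eq s u.

Lemma trace_step_sym s t : trace_step s t -> trace_step t s.
Proof. by case=> u [x [y [v [Hxy -> ->]]]]; exists u, y, x, v; rewrite coC. Qed.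

Lemma trace_eq1 s t : trace_step s t -> trace_eq s t.
Proof. by move=> Hst; apply: trace_eq_step Hst (trace_eq_refl _). Qed.

Lemma trace_eq_trans s t u : trace_eq s t -> trace_eq t u -> trace_eq s u.
Proof. by elim=> // s1 t1 u1 Hst _ IH /IH; apply: trace_eq_step. Qed.

Lemma trace_eq_sym s t : trace_eq s t -> trace_eq t s.
Proof.
elim=> [s1|s1 t1 u1 Hst _ IH]; first exact: trace_eq_refl.
exact: trace_eq_trans IH (trace_eq1 (trace_step_sym Hst)).
Qed.

Lemma trace_eq_size s t : trace_eq s t -> size s = size t.
Proof. by elim=> // s1 t1 u1 [u [x [y [v [_ -> ->]]]]] _ <-; rewrite !size_cat. Qed.

Lemma trace_eq_catl a s t : trace_eq s t -> trace_eq (a ++ s) (a ++ t).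
Proof.
elim=> [s1|s1 t1 u1 [u [x [y [v [Hxy -> ->]]]]] _ IH]; first exact: trace_eq_refl.
by apply: trace_eq_step IH; exists (a ++ u), x, y, v; rewrite !catA.
Qed.

Lemma trace_eq_cons a s t : trace_eq s t -> trace_eq (a :: s) (a :: t).
Proof. exact: (@trace_eq_catl [:: a]). Qed.

Lemma trace_eq_swap u x y v :
  co x y -> trace_eq (u ++ x :: y :: v) (u ++ y :: x :: v).
Proof. by move=> Hxy; apply: trace_eq1; exists u, x, y, v. Qed.

Lemma trace_eq_move_front c s t :
  all (co c) s -> trace_eq (s ++ c :: t) (c :: s ++ t).
Proof.
elim: s => [|a s IH] /=; first by move=> _; apply: trace_eq_refl.
case/andP=> Hca /IH Hs; apply: trace_eq_trans (trace_eq_cons a Hs) _.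
by apply: (@trace_eq_swap [::]); rewrite coC.
Qed.

Definition front_split c w s t :=
  [/\ w = s ++ c :: t, c \notin s & all (co c) s].

Lemma front_split_step w w' c s' t' : trace_step w w' -> front_split c w' s' t' ->
  exists s t, front_split c w s t /\ trace_eq (s' ++ t') (s ++ t).
Proof.
case=> u [x [y [r [Hxy -> ->]]]] [].
elim: u s' => [|a u IH] [|d s'] /=.
- case=> <- <- _ _; have [->|Hxc] := eqVneq x y.
    by exists [::], (y :: r); split; [|apply: trace_eq_refl].
  exists [:: x], r; split; last exact: trace_eq_refl.
  split=> //=; first by rewrite inE eq_sym.
  by rewrite coC Hxy.
- case=> <-; case: s' => [|e s''] /=.
    case=> -> ->; rewrite inE => Hyc /andP[Hcy _].
    by exists [::], (y :: t'); split; [|apply: trace_eq_refl].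
  case=> <- ->; rewrite !inE !negb_or => /and3P[Hyc Hxc Hs''] /and3P[Hcy Hcx Hcs].
  exists [:: x, y & s''], t'; split.
    by split; rewrite //= ?inE ?negb_or ?Hxc ?Hyc ?Hs'' ?Hcx ?Hcy.
  by apply: (@trace_eq_swap [::]); rewrite coC.
- case=> -> <- _ _; exists [::], (u ++ [:: x, y & r]); split=> //.
  by apply: trace_eq_sym; apply: trace_eq_swap.
- case=> -> /IH {}IH; rewrite inE negb_or => /andP[Had Hs'] /andP[Hca Hcs].
  have [s [t [[-> Hcs1 Hall] Est]]] := IH Hs' Hcs.
  exists (d :: s), t; split; last exact: trace_eq_cons.
  by split; rewrite //= ?inE ?negb_or ?Had ?Hca.
Qed.

Lemma trace_eq_consP w c v : trace_eq w (c :: v) ->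
  exists s t, front_split c w s t /\ trace_eq v (s ++ t).
Proof.
move Ecv: (c :: v) => cv Hw; elim: Hw v Ecv => [s|w1 w2 u Hst _ IH] v Ev.
  by exists [::], v; rewrite -Ev; split; [|apply: trace_eq_refl].
have [s' [t' [Hsplit Ev']]] := IH v Ev.
have [s [t [Hsplit' Est]]] := front_split_step Hst Hsplit.
by exists s, t; split=> //; apply: trace_eq_trans Ev' Est.
Qed.

Lemma trace_eq_seq1 x v : trace_eq [:: x] v -> v = [:: x].
Proof.
move E: [:: x] => s Hs; elim: Hs E => // s1 t1 u1 [u [y [z [r [_ -> _]]]]] _ _.
by case: u => [|? [|? ?]].
Qed.

End TraceEquivalence.

Lemma lexle_refl s : lexle s s.
Proof. by elim: s => //= a s ->; rewrite eqxx orbT. Qed.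

Lemma lexle_total s t : lexle s t || lexle t s.
Proof.
elim: s t => [|a s IH] [|c t] //=.
by case: (ltngtP a c) => //= ->; rewrite eqxx IH.
Qed.

Lemma lexle_trans s t u : size s = size t -> size t = size u ->
  lexle s t -> lexle t u -> lexle s u.
Proof.
elim: s t u => [|a s IH] [|b t] [|c u] //= [Hst] [Htu].
case/orP=> [Hab|/andP[/eqP <- H1]]; case/orP=> [Hbc|/andP[/eqP <- H2]].
- by rewrite (ltn_trans Hab Hbc).
- by rewrite Hab.
- by rewrite Hbc.
- by rewrite eqxx (IH _ _ Hst Htu H1 H2) orbT.
Qed.

Lemma lexle_anti s t : size s = size t -> lexle s t -> lexle t s -> s = t.
Proof.
elim: s t => [|a s IH] [|c t] //= [Hst].
by case: (ltngtP a c) => //= <- H1 H2; rewrite (IH _ Hst H1 H2).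
Qed.

Section LexMinimalWords.

Variables (n : nat) (co : rel 'I_n).
Hypothesis coC : symmetric co.

Definition lex_min (m : seq 'I_n) :=
  forall v, trace_eq co m v -> lexle (map val m) (map val v).

Definition allowed (a i : 'I_n) := (a <= i) || ~~ co a i.

Lemma lex_min_seq1 x : lex_min [:: x].
Proof. by move=> v /trace_eq_seq1 ->; apply: lexle_refl. Qed.

Lemma lex_min_behead a m : lex_min (a :: m) -> lex_min m.
Proof. by move=> Hm v /(trace_eq_cons a) /Hm /=; rewrite ltnn eqxx. Qed.

Lemma lex_min_allowed a i m : lex_min (a :: i :: m) -> allowed a i.
Proof.
rewrite /allowed; case: leqP => //= Hia Hm; apply: contraT => /negPn Hai.
have /Hm /= := trace_eq_swap [::] m Hai.
by rewrite ltnNge (ltnW Hia) (gtn_eqF Hia).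
Qed.

Hypothesis no_bad_triple : forall i c a : 'I_n,
  i < c < a -> co i c -> co c a -> co i a.

Lemma lex_min_cons a i m : lex_min (i :: m) -> allowed a i -> lex_min (a :: i :: m).
Proof.
move=> Hm Hai [|c v] Hv; first by have := trace_eq_size Hv.
have [s [t [[Ew Hcs Hall] Ev]]] := trace_eq_consP coC Hv.
case: s Ew Hcs Hall Ev => [|d s] /= [<-].
  move=> Et _ _ Ev /=; rewrite ltnn eqxx /=; apply: Hm.
  by rewrite Et; apply: trace_eq_sym.
move=> Eim; rewrite inE negb_or => /andP[Hca Hcs] /andP[Hcoa Hall] _.
case: (ltngtP a c) => //= [Hac|/val_inj Eac]; last by rewrite Eac eqxx in Hca.
exfalso; move: (Hm (c :: s ++ t)); rewrite {1}Eim.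
move=> /(_ (trace_eq_move_front coC t Hall)) /=.
case: s Eim Hcs Hall => [[Eic _] _ _|e s [<- _]].
  by move: Hai; rewrite /allowed Eic leqNgt Hac /= coC Hcoa.
rewrite inE negb_or => /andP[Hci _] /andP[Hcoi _].
case/orP=> [Hic|/andP[/eqP /val_inj Eic _]]; last by rewrite Eic eqxx in Hci.
move: Hai; rewrite /allowed leqNgt (ltn_trans Hic Hac) /=.
have Hia : co i a by apply: (no_bad_triple (c := c)); rewrite ?Hic ?Hac // coC.
by rewrite coC Hia.
Qed.

Lemma lex_min2P a i m : lex_min (a :: i :: m) <-> lex_min (i :: m) /\ allowed a i.
Proof.
split=> [Hm|[Hm Hai]]; last exact: lex_min_cons.
by split; [apply: lex_min_behead Hm | apply: lex_min_allowed Hm].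
Qed.

End LexMinimalWords.

Lemma commutingC : symmetric commuting.
Proof. by move=> x y; rewrite /commuting /adj orbC. Qed.

Lemma all_iotaP (P : pred nat) m : all P (iota 0 m) -> forall i, i < m -> P i.
Proof. by move/allP=> H i Hi; apply: H; rewrite mem_iota. Qed.

Lemma commuting_no_bad_triple (i c a : letter) :
  i < c < a -> commuting i c -> commuting c a -> commuting i a.
Proof.
have Hall : all (fun a => all (fun c => all (fun i =>
    [==> i < c < a, ~~ adj i.+1 c.+1, ~~ adj c.+1 a.+1 => ~~ adj i.+1 a.+1])
    (iota 0 8)) (iota 0 8)) (iota 0 8) by [].
move=> Hica Hic Hca; move: Hall => /all_iotaP /(_ a (ltn_ord a)).
move=> /all_iotaP /(_ c (ltn_ord c)) /all_iotaP /(_ i (ltn_ord i)).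
by rewrite Hica; move: Hic Hca; rewrite /commuting => -> ->.
Qed.

Lemma stepbP (s t : seq letter) : reflect (trace_step commuting s t) (stepb s t).
Proof.
apply: (iffP hasP) => [[i _ /and3P[Hi Hc /eqP ->]]|[u [x [y [v [Hxy -> ->]]]]]].
  exists (take i s), (nth ord0 s i), (nth ord0 s i.+1), (drop i.+2 s); split=> //.
  by rewrite -{1}(cat_take_drop i s) (drop_nth ord0 (ltnW Hi)) (drop_nth ord0 Hi).
exists (size u); first by rewrite mem_iota size_cat /= add0n addnS ltnS leq_addr.
rewrite size_cat /= !addnS !ltnS leq_addr !nth_cat ltnn subnn ltnNge leqnSn subSnn /=.
rewrite Hxy /swap_at take_size_cat //=; apply/eqP; congr (_ ++ _).
by elim: u {Hxy} => /= [|a u ->]; rewrite ?drop0.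
Qed.

Section Elements.

Variable k : nat.
Implicit Types (u v w m : k.-tuple letter) (C : {set k.-tuple letter}).

Lemma connect_stepRP u v : connect (@stepR k) u v <-> trace_eq commuting u v.
Proof.
split.
  case/connectP=> p; elim: p u => [|x p IH] u /=.
    by move=> _ ->; apply: trace_eq_refl.
  by case/andP=> /stepbP Hux /IH {}IH /IH; apply: trace_eq_step.
move Eu: (val u) => s Huv; move Ev: (val v) => t in Huv.
elim: Huv u Eu Ev => [s0|s0 t0 r Hst _ IH] u Eu Ev.
  by rewrite (val_inj (etrans Eu (esym Ev))); apply: connect0.
have Ht : size t0 == k by rewrite -(trace_eq_size (trace_eq1 Hst)) -Eu size_tuple.
apply: (connect_trans (connect1 _) (IH (Tuple Ht) erefl Ev)).
by rewrite /stepR; apply/stepbP; rewrite Eu.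
Qed.

Lemma mem_cls w v : v \in cls w <-> trace_eq commuting w v.
Proof. by rewrite inE; apply: connect_stepRP. Qed.

Lemma cls_eq w v : trace_eq commuting w v -> cls w = cls v.
Proof.
move=> Hwv; apply/setP => x; apply/idP/idP => /mem_cls Hx; apply/mem_cls.
  exact: trace_eq_trans (trace_eq_sym commutingC Hwv) Hx.
exact: trace_eq_trans Hwv Hx.
Qed.

Lemma is_min_clsP w m :
  is_min (cls w) m <-> trace_eq commuting w m /\ lex_min commuting m.
Proof.
split=> [/andP[/mem_cls Hwm /forall_inP Hm]|[Hwm Hm]].
  split=> // v Hmv; have Hv : size v == k by rewrite -(trace_eq_size Hmv) size_tuple.
  by apply: (Hm (Tuple Hv)); apply/mem_cls; apply: trace_eq_trans Hwm Hmv.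
apply/andP; split; first exact/mem_cls.
apply/forall_inP => v /mem_cls Hwv; apply: Hm.
exact: trace_eq_trans (trace_eq_sym commutingC Hwm) Hwv.
Qed.

Lemma is_min_uniq C m1 m2 : is_min C m1 -> is_min C m2 -> m1 = m2.
Proof.
case/andP=> H1 /forall_inP H1' /andP[H2 /forall_inP H2'].
apply/val_inj/(inj_map val_inj)/lexle_anti; last 2 first.
- exact: H1'.
- exact: H2'.
by rewrite !size_map !size_tuple.
Qed.

Lemma exists_is_min w : exists m, is_min (cls w) m.
Proof.
pose le u v := lexle (map val u) (map val v) : bool.
have le_tot : total le by move=> u v; apply: lexle_total.
have le_tr : transitive le.
  by move=> v u x; apply: lexle_trans; rewrite !size_map !size_tuple.
have := sort_sorted le_tot (enum (cls w)).
have : w \in sort le (enum (cls w)).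
  by rewrite mem_sort mem_enum; apply/mem_cls/trace_eq_refl.
case Es: sort => [|m s] //= _ /(order_path_min le_tr) /allP Hs.
have Hm v : v \in cls w -> v \in m :: s by rewrite -Es mem_sort mem_enum.
exists m; apply/andP; split; first by rewrite -mem_enum -(mem_sort le) Es mem_head.
apply/forall_inP => v /Hm; rewrite inE => /orP[/eqP ->|/Hs //].
exact: lexle_refl.
Qed.

Definition nf : {set k.-tuple letter} := [set w | is_min (cls w) w].

Lemma nfP w : w \in nf <-> lex_min commuting w.
Proof.
rewrite inE; split=> [/is_min_clsP[] //|Hw].
by apply/is_min_clsP; split=> //; apply: trace_eq_refl.
Qed.

Lemma elementsE : elements k = @cls k @: nf.
Proof.
apply/setP => C; apply/imsetP/imsetP => [[w _ ->]|[m _ ->]]; last by exists m.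
have [m /is_min_clsP[Hwm Hm]] := exists_is_min w.
by exists m; [apply/nfP | apply: cls_eq].
Qed.

Lemma is_min_cls_nf w m : w \in nf -> is_min (cls w) m = (m == w).
Proof.
rewrite inE => Hw; apply/idP/eqP => [Hm|->] //.
exact: is_min_uniq Hm Hw.
Qed.

Lemma cls_nf_inj : {in nf &, injective (@cls k)}.
Proof.
move=> u v Hu Hv Euv; apply/eqP; rewrite -(is_min_cls_nf _ Hv) -Euv.
by move: Hu; rewrite inE.
Qed.

Lemma card_elements_min (P : pred (k.-tuple letter)) :
  #|[set C in elements k | [exists w, is_min C w && P w]]| = #|[set w in nf | P w]|.
Proof.
have inj : {in [set w in nf | P w] &, injective (@cls k)}.
  by apply: sub_in2 cls_nf_inj => w /setIdP[].
rewrite -(card_in_imset inj) elementsE; apply: eq_card => C; rewrite inE.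
apply/andP/imsetP => [[/imsetP[w Hw ->] /existsP[m]]|[w /setIdP[Hw Pw] ->]].
  by rewrite is_min_cls_nf // => /andP[/eqP -> Pw]; exists w => //; apply/setIdP.
split; first exact: imset_f.
by apply/existsP; exists w; rewrite is_min_cls_nf // eqxx.
Qed.

End Elements.

Lemma card_nf_cons k (x : letter) :
  #|[set w in nf k.+2 | thead w == x]| =
  #|[set w in nf k.+1 | allowed commuting x (thead w)]|.
Proof.
have inj : injective (fun w : k.+1.-tuple letter => [tuple of x :: w]).
  by move=> u v /(congr1 val) [/val_inj].
rewrite -(card_imset _ inj); apply: eq_card => w; rewrite inE.
case/tupleP: w => y w; rewrite theadE.
apply/andP/imsetP => [[/nfP Hm /eqP Eyx]|[v /setIdP[/nfP Hv Hxv] [-> /val_inj ->]]].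
  exists w; last by rewrite Eyx.
  case/tupleP: w Hm => z w /= /(lex_min2P commutingC commuting_no_bad_triple) [Hm Hyz].
  by apply/setIdP; split; [apply/nfP | rewrite theadE -Eyx].
split=> //; apply/nfP; case/tupleP: v Hv Hxv => z v /= Hv Hxz.
exact/(lex_min2P commutingC commuting_no_bad_triple).
Qed.

Lemma card_setIdE (T : finType) (A : {set T}) (p : pred T) :
  #|[set x in A | p x]| = \sum_(x in A) p x.
Proof.
rewrite -sum1dep_card big_mkcondr /=; apply: eq_bigr => x _.
by case: (p x).
Qed.

Lemma sum_card_fibers (T : finType) (A : {set T}) (h : T -> nat) a n :
  \sum_(a <= i < n) #|[set x in A | h x == i]| = #|[set x in A | a <= h x < n]|.
Proof.
under eq_bigr => i _ do rewrite card_setIdE.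
rewrite exchange_big card_setIdE; apply: eq_bigr => x _.
by rewrite -big_mkcond /= (eq_bigl _ _ (fun i => eq_sym _ _)) big_nat1_eq.
Qed.

Lemma bE k : b k = #|nf k|.
Proof. by rewrite /b elementsE card_in_imset //; apply: cls_nf_inj. Qed.

Lemma bfE k j : bf k.+1 j = #|[set w in nf k.+1 | (thead w : nat).+1 == j]|.
Proof.
rewrite /bf card_elements_min; apply: eq_card => w.
by case/tupleP: w => x w; rewrite !inE.
Qed.

Lemma head_index_eq k (w : k.+1.-tuple letter) j :
  0 < j < 9 -> ((thead w : nat).+1 == j) = (thead w == inord j.-1).
Proof. by move=> Hj; rewrite -val_eqE /= inordK; lia. Qed.

Lemma card_nf_head k j : 0 < j < 9 ->
  #|[set w in nf k.+2 | (thead w : nat).+1 == j]| =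
  #|[set w in nf k.+1 | allowed commuting (inord j.-1) (thead w)]|.
Proof.
move=> Hj; rewrite -card_nf_cons; apply: eq_card => w.
by rewrite !inE head_index_eq.
Qed.

Lemma allowed_commuting (x y : letter) : (x : nat) != 4 ->
  allowed commuting x y = (maxn 1 (x : nat) <= (y : nat).+1 < 9).
Proof.
have Hall : all (fun a => all (fun h =>
    (a != 4) ==> (((a <= h) || adj a.+1 h.+1) == (maxn 1 a <= h.+1 < 9)))
    (iota 0 8)) (iota 0 8) by [].
move=> Hx; move: Hall => /all_iotaP /(_ x (ltn_ord x)) /all_iotaP /(_ y (ltn_ord y)).
by rewrite Hx /allowed /commuting negbK => /eqP.
Qed.

Lemma allowed_commuting_x5 (y : letter) :
  allowed commuting (inord 4) y = ((y : nat).+1 == 3) + (5 <= (y : nat).+1 < 9) :> nat.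
Proof.
have Hall : all (fun h =>
    ((4 <= h) || adj 5 h.+1 : nat) == (h.+1 == 3) + (5 <= h.+1 < 9)) (iota 0 8) by [].
move: Hall => /all_iotaP /(_ y (ltn_ord y)).
have Hx : val (inord 4 : letter) = 4 by apply: inordK.
by rewrite /allowed /commuting negbK Hx inordK // => /eqP.
Qed.

Lemma b_0 : b 0 = 1.
Proof.
transitivity #|{: 0.-tuple letter}|; last by rewrite card_tuple.
rewrite bE; apply: eq_card => w.
by rewrite (tuple0 w) [RHS]inE; apply/nfP => v.
Qed.

Lemma bf_1 i : 1 <= i <= 8 -> bf 1 i = 1.
Proof.
move=> Hi; rewrite bfE.
transitivity #|[set [tuple (inord i.-1 : letter)]]|; last exact: cards1.
apply: eq_card => w; case/tupleP: w => x w; rewrite (tuple0 w) inE.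
have -> : [tuple x] \in nf 1 by apply/nfP; apply: lex_min_seq1.
rewrite head_index_eq; last lia.
by rewrite inE theadE -[RHS]val_eqE /= eqseq_cons eqxx andbT.
Qed.

Lemma b_sum_bf k : b k.+1 = \sum_(1 <= i < 9) bf k.+1 i.
Proof.
rewrite bE; under eq_bigr => i _ do rewrite bfE.
rewrite sum_card_fibers; apply: eq_card => w.
by rewrite [RHS]inE (ltn_ord (thead w) : 0 < (thead w : nat).+1 < 9) andbT.
Qed.

Lemma bf_succ k j : 1 <= j <= 8 -> j != 5 ->
  bf k.+2 j = \sum_(maxn 1 j.-1 <= i < 9) bf k.+1 i.
Proof.
move=> Hj Hj5; rewrite bfE card_nf_head; last lia.
under eq_bigr => i _ do rewrite bfE.
rewrite sum_card_fibers; apply: eq_card => w.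
by rewrite !inE allowed_commuting inordK //; lia.
Qed.

Lemma bf_succ_5 k : bf k.+2 5 = bf k.+1 3 + \sum_(5 <= i < 9) bf k.+1 i.
Proof.
rewrite bfE card_nf_head // bfE; under eq_bigr => i _ do rewrite bfE.
rewrite sum_card_fibers !card_setIdE -big_split /=.
by apply: eq_bigr => w _; rewrite allowed_commuting_x5.
Qed.

Theorem lemma9 :
  b 0 = 1 /\
  (forall i, 1 <= i <= 8 -> bf 1 i = 1) /\
  (forall k, 1 <= k -> b k = \sum_(1 <= i < 9) bf k i) /\
  (forall k j, 2 <= k -> 1 <= j <= 8 -> j != 5 ->
     bf k j = \sum_(maxn 1 j.-1 <= i < 9) bf k.-1 i) /\
  (forall k, 2 <= k -> bf k 5 = bf k.-1 3 + \sum_(5 <= i < 9) bf k.-1 i).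
Proof.
split; first exact: b_0.
split; first exact: bf_1.
split; first by case=> // k _; apply: b_sum_bf.
split; first by case=> [|[|k]] // j _; apply: bf_succ.
by case=> [|[|k]] // _; apply: bf_succ_5.
Qed.
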